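(* Let $b>0$ and let $x_0,x_\infty$ be as in the context. Then $x_\infty<x_0$.
   Context: Constants: $a\in\mathbb{R}$, $b>0$, $\sigma>0$, $\rho>0$, $c>0$. For $\beta<0$, let $D_\beta(x)=\frac{e^{-x^2/4}}{\Gamma(-\beta)}\int_0^\infty t^{-\beta-1}e^{-t^2/2-xt}\,dt$, and $\psi(x)=e^{\frac{(bx-a)^2}{2\sigma^2 b}}D_{-\rho/b}\big(-\frac{bx-a}{\sigma b}\sqrt{2b}\big)$, the positive strictly increasing fundamental solution of $\frac12\sigma^2u''+(a-bx)u'-\rho u=0$. Let $x_0$ be the unique solution on $(c,\infty)$ of $(x-c)\psi'(x)-\psi(x)=0$ and $x_\infty$ the unique solution on $(c,\infty)$ of $(x-c)\psi''(x)-\psi'(x)=0$ (these exist and are unique). *)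

From Stdlib Require Import Reals.
From Coquelicot Require Import Coquelicot.
Open Scope R_scope.

Definition Gamma_fun (s : R) : R :=
  RInt_gen (fun t => Rpower t (s - 1) * exp (- t))
           (at_right 0) (Rbar_locally p_infty).

(* Parabolic cylinder function for beta < 0:
   D_beta(x) = e^{-x^2/4}/Gamma(-beta) * int_0^oo t^{-beta-1} e^{-t^2/2 - x t} dt. *)
Definition Dpc (beta x : R) : R :=
  exp (- x ^ 2 / 4) / Gamma_fun (- beta) *
  RInt_gen (fun t => Rpower t (- beta - 1) * exp (- t ^ 2 / 2 - x * t))
           (at_right 0) (Rbar_locally p_infty).

Definition psi (a b sigma rho : R) (x : R) : R :=
  exp ((b * x - a) ^ 2 / (2 * sigma ^ 2 * b)) *
  Dpc (- rho / b) (- (b * x - a) / (sigma * b) * sqrt (2 * b)).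

Definition eq_x0 (a b sigma rho c x : R) : Prop :=
  (x - c) * Derive (psi a b sigma rho) x - psi a b sigma rho x = 0.

Definition eq_xinf (a b sigma rho c x : R) : Prop :=
  (x - c) * Derive (fun y => Derive (psi a b sigma rho) y) x
  - Derive (psi a b sigma rho) x = 0.

From Stdlib Require Import Reals Lra Psatz.
From Coquelicot Require Import Coquelicot.
Open Scope R_scope.

(* With z = -(b x - a) sqrt (2 b) / (sigma b), psi is a constant multiple of M_p(z), where
   p = rho / b - 1 and M_q(X) = int_0^oo t^q exp (- t^2 / 2 - X t) dt.  Differentiating under
   the integral gives dM_q/dX = - M_(q+1), and z has slope - k with k > 0, so the n-th
   derivative of psi is proportional to k^n M_(p+n)(z).  The strict Cauchy-Schwarz inequality
   M_(q+1)^2 < M_q M_(q+2) turns the equation (x0 - c) k M_(p+1) = M_p defining x0 into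
   (x0 - c) k M_(p+2) > M_(p+1): the function (x - c) psi'' - psi', negative at c, is positive
   at x0, so its unique zero x_infty lies between c and x0. *)

Lemma exp_le_compat x y : x <= y -> exp x <= exp y.
Proof.
  intros Hxy. destruct (Rle_lt_or_eq_dec x y Hxy) as [Hlt | ->].
  - apply Rlt_le, exp_increasing, Hlt.
  - apply Rle_refl.
Qed.

Lemma at_right_0_pos : at_right 0 (fun t => 0 < t).
Proof. exists (mkposreal 1 Rlt_0_1). intros t _ Ht. exact Ht. Qed.

Lemma at_right_0_lt u : 0 < u -> at_right 0 (fun t => 0 < t < u).
Proof.
  intros Hu. exists (mkposreal u Hu). intros t Htu Ht.
  change (Rabs (t - 0) < u) in Htu. rewrite Rminus_0_r, Rabs_pos_eq in Htu; lra.
Qed.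

Lemma filterlim_at_point (G : R -> R) a : filterlim G (at_point a) (locally (G a)).
Proof. intros P HP. exact (locally_singleton _ _ HP). Qed.

Lemma filterlim_mult_0 {F : (R -> Prop) -> Prop} {FF : Filter F} (f : R -> R) c :
  filterlim f F (locally 0) -> filterlim (fun t => c * f t) F (locally 0).
Proof.
  intros Hf. rewrite <- (Rmult_0_r c).
  exact (filterlim_comp _ _ _ f (Rmult c) F (locally 0) _ Hf (filterlim_Rbar_mult_l c 0)).
Qed.

Lemma Rpower_lim_0 r : 0 < r -> filterlim (fun t => Rpower t r) (at_right 0) (locally 0).
Proof.
  intros Hr. unfold Rpower.
  assert (E : Rbar_mult r m_infty = m_infty).
  { rewrite Rbar_mult_comm. apply is_Rbar_mult_unique, is_Rbar_mult_m_infty_pos. exact Hr. }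
  apply (filterlim_comp _ _ _ (fun t => r * ln t) exp _ (Rbar_locally m_infty));
    [| exact is_lim_exp_m].
  apply (filterlim_comp _ _ _ ln (Rmult r) _ (Rbar_locally m_infty)); [exact is_lim_ln_0 |].
  rewrite <- E at 2. apply filterlim_Rbar_mult_l.
Qed.

Lemma exp_opp_lim_infty : filterlim (fun t => exp (- t)) (Rbar_locally p_infty) (locally 0).
Proof.
  apply (filterlim_comp _ _ _ Ropp exp _ (Rbar_locally m_infty)); [| exact is_lim_exp_m].
  exact (is_lim_opp (fun t => t) p_infty p_infty (is_lim_id p_infty)).
Qed.

Lemma abs_exp_sub_1_sub_le u : Rabs (exp u - 1 - u) <= u ^ 2 * exp (Rabs u).
Proof.
  assert (Hlow := exp_ineq1_le u).
  assert (Hinv : exp u * exp (- u) = 1) by (rewrite <- exp_plus, Rplus_opp_r; exact exp_0).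
  assert (Hlow' := exp_ineq1_le (- u)).
  assert (Hpos := exp_pos u). assert (Hpos' := exp_pos (- u)).
  rewrite Rabs_pos_eq by lra.
  destruct (Rle_or_lt 0 u) as [Hu | Hu].
  - rewrite Rabs_pos_eq by exact Hu. nra.
  - rewrite Rabs_left by exact Hu. nra.
Qed.

Lemma is_derive_quadratic_bound (f : R -> R) x l K :
  (forall h, Rabs h <= 1 -> Rabs (f (x + h) - f x - h * l) <= h ^ 2 * K) -> is_derive f x l.
Proof.
  intros Hbound. apply is_derive_Reals. intros eps Heps.
  assert (HK := Rabs_pos K).
  assert (Hdelta : 0 < Rmin 1 (eps / (Rabs K + 1)))
    by (apply Rmin_pos; [lra | apply Rdiv_lt_0_compat; lra]).
  exists (mkposreal _ Hdelta). intros h Hh0 Hh. simpl in Hh.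
  assert (Hh1 := Rlt_le _ _ (Rlt_le_trans _ _ _ Hh (Rmin_l _ _))).
  assert (Hh2 := Rlt_le_trans _ _ _ Hh (Rmin_r _ _)).
  assert (Habs := Rabs_pos_lt h Hh0).
  specialize (Hbound h Hh1).
  replace ((f (x + h) - f x) / h - l) with ((f (x + h) - f x - h * l) / h) by (field; exact Hh0).
  unfold Rdiv. rewrite Rabs_mult, Rabs_inv.
  apply Rle_lt_trans with (Rabs h * Rabs K).
  - apply Rmult_le_reg_r with (1 := Habs). rewrite Rmult_assoc, Rinv_l by lra.
    assert (Hsq : h ^ 2 = Rabs h * Rabs h) by (rewrite <- Rabs_mult, Rabs_pos_eq by nra; ring).
    pose proof (Rle_abs K). nra.
  - apply Rmult_lt_compat_r with (r := Rabs K + 1) in Hh2; [| lra].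
    replace (eps / (Rabs K + 1) * (Rabs K + 1)) with eps in Hh2 by (field; lra). nra.
Qed.

Section Comparison.

Variables (D : R -> Prop) (f g G : R -> R).
Hypothesis D_convex : forall x y z, D x -> D z -> x <= y <= z -> D y.
Hypothesis f_cont : forall x, D x -> continuous f x.
Hypothesis g_cont : forall x, D x -> continuous g x.
Hypothesis G_deriv : forall x, D x -> is_derive G x (g x).
Hypothesis abs_f_le_g : forall x, D x -> Rabs (f x) <= g x.

Lemma D_between s t x : D s -> D t -> Rmin s t <= x <= Rmax s t -> D x.
Proof.
  intros Ds Dt Hx. unfold Rmin, Rmax in Hx.
  destruct (Rle_dec s t); [apply (D_convex s x t) | apply (D_convex t x s)]; auto; lra.
Qed.

Lemma ex_RInt_in s t : D s -> D t -> ex_RInt f s t.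
Proof.
  intros Ds Dt. apply (ex_RInt_continuous (V := R_CompleteNormedModule)).
  intros x Hx. apply f_cont, (D_between s t); auto.
Qed.

Lemma abs_RInt_le_primitive s t : D s -> D t -> Rabs (RInt f s t) <= Rabs (G t - G s).
Proof.
  assert (Hle : forall s t, s <= t -> D s -> D t -> Rabs (RInt f s t) <= Rabs (G t - G s)).
  { intros s' t' Hst Ds Dt.
    eapply Rle_trans; [| apply Rle_abs].
    apply (norm_RInt_le f g s' t'); [exact Hst | | | ].
    - intros x Hx. apply abs_f_le_g, (D_between s' t'); auto. rewrite Rmin_left, Rmax_right; lra.
    - apply (RInt_correct (V := R_CompleteNormedModule)), ex_RInt_in; auto.
    - apply (is_RInt_derive (V := R_CompleteNormedModule) G g); intros x Hx;
        [apply G_deriv | apply g_cont]; apply (D_between s' t'); auto. }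
  intros Ds Dt. destruct (Rle_or_lt s t) as [Hst | Hts]; [auto |].
  rewrite <- (opp_RInt_swap (V := R_CompleteNormedModule)), Rabs_minus_sym
    by (apply ex_RInt_in; auto).
  change (Rabs (- RInt f t s) <= Rabs (G s - G t)). rewrite Rabs_Ropp. apply Hle; auto; lra.
Qed.

Lemma ex_RInt_gen_dominated (Fa Fb : (R -> Prop) -> Prop)
  {FFa : ProperFilter Fa} {FFb : ProperFilter Fb} (La Lb : R) :
  Fa D -> Fb D -> filterlim G Fa (locally La) -> filterlim G Fb (locally Lb) ->
  ex_RInt_gen f Fa Fb.
Proof.
  intros FaD FbD GLa GLb.
  assert (DD : filter_prod Fa Fb (fun ab => D (fst ab) /\ D (snd ab))).
  { apply (Filter_prod _ _ _ D D); auto. }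
  apply (filterlimi_locally_cauchy (fun ab => is_RInt f (fst ab) (snd ab))).
  - apply (filter_imp _ _) with (2 := DD). intros [a b] [Da Db]. simpl. split.
    + exists (RInt f a b). apply (RInt_correct (V := R_CompleteNormedModule)), ex_RInt_in; auto.
    + intros y1 y2 H1 H2. rewrite <- (is_RInt_unique (V := R_CompleteNormedModule) _ _ _ _ H1).
      apply (is_RInt_unique (V := R_CompleteNormedModule)), H2.
  - intros eps.
    assert (Heps : 0 < eps / 4) by (destruct eps; simpl; lra).
    set (e := mkposreal _ Heps).
    exists (fun ab => (D (fst ab) /\ ball La e (G (fst ab)))
                   /\ (D (snd ab) /\ ball Lb e (G (snd ab)))).
    split.
    + apply (Filter_prod _ _ _ (fun a => D a /\ ball La e (G a)) (fun b => D b /\ ball Lb e (G b)));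
        try apply filter_and; auto;
        [apply (proj1 (filterlim_locally G La) GLa) | apply (proj1 (filterlim_locally G Lb) GLb)].
    + intros [a b] [a' b'] [[Da Ga] [Db Gb]] [[Da' Ga'] [Db' Gb']] u' v' Hu Hv. simpl in *.
      apply (is_RInt_unique (V := R_CompleteNormedModule)) in Hu.
      apply (is_RInt_unique (V := R_CompleteNormedModule)) in Hv. subst u' v'.
      assert (Hsplit : RInt f a' b' - RInt f a b = RInt f b b' - RInt f a a').
      { rewrite <- (RInt_Chasles (V := R_CompleteNormedModule) f a' a b'),
          <- (RInt_Chasles (V := R_CompleteNormedModule) f a b b'),
          <- (opp_RInt_swap (V := R_CompleteNormedModule) f a a');
          try apply ex_RInt_in; auto.
        change (- RInt f a a' + (RInt f a b + RInt f b b') - RInt f a b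
                = RInt f b b' - RInt f a a').
        ring. }
      change (Rabs (RInt f a' b' - RInt f a b) < eps). rewrite Hsplit.
      assert (Bb := abs_RInt_le_primitive b b' Db Db').
      assert (Ba := abs_RInt_le_primitive a a' Da Da').
      change (Rabs (G a - La) < eps / 4) in Ga. change (Rabs (G a' - La) < eps / 4) in Ga'.
      change (Rabs (G b - Lb) < eps / 4) in Gb. change (Rabs (G b' - Lb) < eps / 4) in Gb'.
      unfold Rabs in *. repeat destruct Rcase_abs; lra.
Qed.

End Comparison.

Lemma is_RInt_gen_ge (Fa Fb : (R -> Prop) -> Prop) {FFa : ProperFilter Fa} {FFb : ProperFilter Fb}
  (h : R -> R) m l :
  filter_prod Fa Fb (fun ab => forall y, is_RInt h (fst ab) (snd ab) y -> m <= y) ->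
  is_RInt_gen h Fa Fb l -> m <= l.
Proof.
  intros Hm Hl. destruct (Rle_or_lt m l) as [Hle | Hlt]; [exact Hle | exfalso].
  assert (Hpos : 0 < m - l) by lra.
  assert (Hball := Hl _ (locally_ball l (mkposreal _ Hpos))).
  assert (FP : ProperFilter (filter_prod Fa Fb)) by (apply filter_prod_proper; auto).
  destruct (filter_ex _ (filter_and _ _ Hm Hball)) as [ab [Hge [y [Hy Hyl]]]].
  specialize (Hge y Hy). change (Rabs (y - l) < m - l) in Hyl.
  apply Rabs_def2 in Hyl. lra.
Qed.

Lemma is_RInt_gen_gt_0 (h : R -> R) u v l : 0 < u < v ->
  (forall t, 0 < t -> continuous h t) -> (forall t, 0 < t -> 0 <= h t) ->
  (forall t, u < t < v -> 0 < h t) ->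
  is_RInt_gen h (at_right 0) (Rbar_locally p_infty) l -> 0 < l.
Proof.
  intros Huv Hcont Hnonneg Hpos Hl.
  assert (Hex : forall s t, 0 < s -> s <= t -> ex_RInt h s t).
  { intros s t Hs Hst. apply (ex_RInt_continuous (V := R_CompleteNormedModule)).
    intros x Hx. rewrite Rmin_left, Rmax_right in Hx by lra. apply Hcont. lra. }
  assert (Huv_pos : 0 < RInt h u v).
  { apply RInt_gt_0; [lra | exact Hpos | intros x Hx; apply Hcont; lra]. }
  apply Rlt_le_trans with (1 := Huv_pos).
  apply (is_RInt_gen_ge (at_right 0) (Rbar_locally p_infty) h); [| exact Hl].
  apply (Filter_prod _ _ _ (fun a => 0 < a < u) (fun b => v < b)).
  - apply at_right_0_lt. lra.
  - exists v. auto.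
  - intros a b Ha Hb y Hy. simpl in Hy. apply (is_RInt_unique (V := R_CompleteNormedModule)) in Hy.
    subst y.
    rewrite <- (RInt_Chasles (V := R_CompleteNormedModule) h a u b),
      <- (RInt_Chasles (V := R_CompleteNormedModule) h u v b) by (apply Hex; lra).
    assert (0 <= RInt h a u)
      by (apply RInt_ge_0; [lra | apply Hex; lra | intros; apply Hnonneg; lra]).
    assert (0 <= RInt h v b)
      by (apply RInt_ge_0; [lra | apply Hex; lra | intros; apply Hnonneg; lra]).
    change (RInt h u v <= RInt h a u + (RInt h u v + RInt h v b)). lra.
Qed.

Definition weight (q X t : R) : R := Rpower t q * exp (- t ^ 2 / 2 - X * t).

Definition moment (q X : R) : R := RInt_gen (weight q X) (at_right 0) (Rbar_locally p_infty).

Lemma weight_pos q X t : 0 < weight q X t.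
Proof. apply Rmult_lt_0_compat; apply exp_pos. Qed.

Lemma weight_succ q X t : 0 < t -> weight (q + 1) X t = t * weight q X t.
Proof. intros Ht. unfold weight. rewrite Rpower_plus, Rpower_1 by exact Ht. ring. Qed.

Lemma weight_add2 q X t : 0 < t -> weight (q + 2) X t = t ^ 2 * weight q X t.
Proof.
  intros Ht. replace (q + 2) with (q + 1 + 1) by ring. rewrite !weight_succ by exact Ht. ring.
Qed.

Lemma weight_shift q X h t : weight q (X + h) t = weight q X t * exp (- (h * t)).
Proof. unfold weight. rewrite Rmult_assoc, <- exp_plus. do 2 f_equal. ring. Qed.

Lemma continuous_weight q X t : 0 < t -> continuous (weight q X) t.
Proof.
  intros Ht. apply (ex_derive_continuous (weight q X)).
  unfold weight, Rpower. auto_derive. exact Ht.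
Qed.

Lemma ex_RInt_gen_weight_0_1 q X : -1 < q -> ex_RInt_gen (weight q X) (at_right 0) (at_point 1).
Proof.
  intros Hq. set (C := exp (X ^ 2 / 2)).
  apply (ex_RInt_gen_dominated (fun t => 0 < t) (weight q X) (fun t => C * Rpower t q)
    (fun t => C / (q + 1) * Rpower t (q + 1)))
    with (La := 0) (Lb := C / (q + 1) * Rpower 1 (q + 1)).
  - intros x y z Hx _ Hy. lra.
  - apply continuous_weight.
  - intros t Ht. apply (ex_derive_continuous (fun t => C * Rpower t q)).
    unfold Rpower. auto_derive. exact Ht.
  - intros t Ht. apply is_derive_Reals. unfold Rpower. auto_derive; [exact Ht |].
    replace ((q + 1) * ln t) with (q * ln t + ln t) by ring. rewrite exp_plus, exp_ln by exact Ht.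
    field. split; lra.
  - intros t Ht. rewrite Rabs_pos_eq by apply Rlt_le, weight_pos. unfold weight.
    rewrite Rmult_comm. apply Rmult_le_compat_r; [apply Rlt_le, exp_pos |]. apply exp_le_compat.
    assert (0 <= (t + X) ^ 2) by apply pow2_ge_0. lra.
  - apply at_right_proper_filter.
  - apply at_point_filter.
  - exact at_right_0_pos.
  - exact Rlt_0_1.
  - apply filterlim_mult_0, Rpower_lim_0. lra.
  - apply (filterlim_at_point (fun t => C / (q + 1) * Rpower t (q + 1))).
Qed.

Lemma ex_RInt_gen_weight_1_infty q X : ex_RInt_gen (weight q X) (at_point 1) (Rbar_locally p_infty).
Proof.
  set (A := Rabs q + Rabs X + 1). set (C := exp (A ^ 2 / 2)).
  apply (ex_RInt_gen_dominated (fun t => 1 <= t) (weight q X) (fun t => C * exp (- t))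
    (fun t => - C * exp (- t))) with (La := (fun t => - C * exp (- t)) 1) (Lb := 0).
  - intros x y z Hx _ Hy. lra.
  - intros t Ht. apply continuous_weight. lra.
  - intros t _. apply (ex_derive_continuous (fun t => C * exp (- t))). auto_derive. exact I.
  - intros t _. auto_derive; [exact I | ring].
  - intros t Ht. rewrite Rabs_pos_eq by apply Rlt_le, weight_pos.
    unfold weight, Rpower, C. rewrite <- !exp_plus. apply exp_le_compat.
    assert (Hln0 : 0 <= ln t) by (rewrite <- ln_1; apply ln_le; lra).
    assert (Hln : ln t <= t - 1) by (assert (H := exp_ineq1_le (ln t)); rewrite exp_ln in H; lra).
    assert (q * ln t <= Rabs q * t).
    { apply Rle_trans with (Rabs q * ln t); [apply Rmult_le_compat_r, Rle_abs; exact Hln0 |].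
      apply Rmult_le_compat_l; [apply Rabs_pos | lra]. }
    assert (- (X * t) <= Rabs X * t).
    { assert (- X <= Rabs X) by (rewrite <- Rabs_Ropp; apply Rle_abs). nra. }
    assert (0 <= (t - A) ^ 2) by apply pow2_ge_0. unfold A in *. nra.
  - apply at_point_filter.
  - apply Rbar_locally_filter.
  - apply Rle_refl.
  - exists 1. intros t Ht. lra.
  - apply (filterlim_at_point (fun t => - C * exp (- t))).
  - apply filterlim_mult_0, exp_opp_lim_infty.
Qed.

Lemma ex_RInt_gen_weight q X : -1 < q ->
  ex_RInt_gen (weight q X) (at_right 0) (Rbar_locally p_infty).
Proof.
  intros Hq. apply (ex_RInt_gen_Chasles _ 1).
  - apply ex_RInt_gen_weight_0_1, Hq.
  - apply ex_RInt_gen_weight_1_infty.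
Qed.

Lemma is_RInt_gen_moment q X : -1 < q ->
  is_RInt_gen (weight q X) (at_right 0) (Rbar_locally p_infty) (moment q X).
Proof.
  intros Hq. apply (RInt_gen_correct (V := R_CompleteNormedModule)), ex_RInt_gen_weight, Hq.
Qed.

Lemma moment_pos q X : -1 < q -> 0 < moment q X.
Proof.
  intros Hq. apply (is_RInt_gen_gt_0 (weight q X) 1 2) with (5 := is_RInt_gen_moment q X Hq);
    [lra | apply continuous_weight | |].
  - intros t _. apply Rlt_le, weight_pos.
  - intros t _. apply weight_pos.
Qed.

Lemma moment_sq_lt q X : -1 < q -> moment (q + 1) X ^ 2 < moment q X * moment (q + 2) X.
Proof.
  intros Hq. assert (M0 := moment_pos q X Hq).
  set (lam := moment (q + 1) X / moment q X).
  assert (Hquad : is_RInt_gen (fun t => weight q X t * (t - lam) ^ 2)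
    (at_right 0) (Rbar_locally p_infty)
    (moment (q + 2) X - 2 * lam * moment (q + 1) X + lam ^ 2 * moment q X)).
  { assert (M2 := is_RInt_gen_moment (q + 2) X ltac:(lra)).
    assert (M1 := is_RInt_gen_moment (q + 1) X ltac:(lra)).
    assert (Hsum := is_RInt_gen_plus _ _ _ _
      (is_RInt_gen_minus _ _ _ _ M2 (is_RInt_gen_scal _ (2 * lam) _ M1))
      (is_RInt_gen_scal _ (lam ^ 2) _ (is_RInt_gen_moment q X Hq))).
    apply (is_RInt_gen_ext _ _ _) with (2 := Hsum).
    apply (Filter_prod _ _ _ (fun a => 0 < a) (fun b => 0 < b) at_right_0_pos); [exists 0; auto |].
    intros a b Ha Hb t Ht. simpl in Ht.
    assert (0 < t) by (unfold Rmin in Ht; destruct (Rle_dec a b); lra).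
    change (weight (q + 2) X t - 2 * lam * weight (q + 1) X t + lam ^ 2 * weight q X t
      = weight q X t * (t - lam) ^ 2).
    rewrite weight_add2, weight_succ by assumption. ring. }
  assert (Hpos : 0 < moment (q + 2) X - 2 * lam * moment (q + 1) X + lam ^ 2 * moment q X).
  { pose proof (Rle_abs lam). pose proof (Rabs_pos lam).
    apply (is_RInt_gen_gt_0 _ (Rabs lam + 1) (Rabs lam + 2)) with (5 := Hquad); [lra | | |].
    - intros t Ht. apply (continuous_mult (weight q X) (fun t => (t - lam) ^ 2)).
      + apply continuous_weight, Ht.
      + apply (ex_derive_continuous (fun t => (t - lam) ^ 2)). auto_derive. exact I.
    - intros t _. apply Rmult_le_pos; [apply Rlt_le, weight_pos | apply pow2_ge_0].
    - intros t Ht. apply Rmult_lt_0_compat; [apply weight_pos | apply pow2_gt_0; lra]. }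
  unfold lam in Hpos. apply Rmult_lt_compat_l with (r := moment q X) in Hpos; [| exact M0].
  replace (moment q X * (moment (q + 2) X - 2 * (moment (q + 1) X / moment q X) * moment (q + 1) X
    + (moment (q + 1) X / moment q X) ^ 2 * moment q X))
    with (moment q X * moment (q + 2) X - moment (q + 1) X ^ 2) in Hpos by (field; lra).
  lra.
Qed.

Lemma moment_ratio_step q X s : -1 < q ->
  s * moment (q + 1) X = moment q X -> moment (q + 1) X < s * moment (q + 2) X.
Proof.
  intros Hq Hs. assert (M1 := moment_pos (q + 1) X ltac:(lra)).
  apply Rmult_lt_reg_l with (1 := M1).
  assert (CS := moment_sq_lt q X Hq). rewrite <- Hs in CS. nra.
Qed.

Lemma abs_weight_taylor_le q X h t : 0 < t -> Rabs h <= 1 ->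
  Rabs (weight q (X + h) t - weight q X t + h * weight (q + 1) X t)
  <= h ^ 2 * weight (q + 2) (- (Rabs X + 1)) t.
Proof.
  intros Ht Hh.
  rewrite weight_add2, weight_succ, weight_shift by exact Ht.
  replace (- (Rabs X + 1)) with (X + (- (Rabs X + 1) - X)) by ring. rewrite weight_shift.
  set (w := weight q X t). assert (Hw : 0 < w) by apply weight_pos.
  replace (w * exp (- (h * t)) - w + h * (t * w)) with (w * (exp (- (h * t)) - 1 - - (h * t)))
    by ring.
  rewrite Rabs_mult, (Rabs_pos_eq w) by lra.
  assert (Htaylor := abs_exp_sub_1_sub_le (- (h * t))).
  assert (Hexp : exp (Rabs (- (h * t))) <= exp (- ((- (Rabs X + 1) - X) * t))).
  { apply exp_le_compat. rewrite Rabs_Ropp, Rabs_mult, (Rabs_pos_eq t) by lra.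
    pose proof (Rle_abs (- X)). rewrite Rabs_Ropp in *. nra. }
  apply Rle_trans with (w * ((- (h * t)) ^ 2 * exp (- ((- (Rabs X + 1) - X) * t)))).
  - apply Rmult_le_compat_l; [lra |]. apply Rle_trans with (1 := Htaylor).
    apply Rmult_le_compat_l; [apply pow2_ge_0 | exact Hexp].
  - right. ring.
Qed.

Lemma abs_moment_taylor_le q X h : -1 < q -> Rabs h <= 1 ->
  Rabs (moment q (X + h) - moment q X + h * moment (q + 1) X)
  <= h ^ 2 * moment (q + 2) (- (Rabs X + 1)).
Proof.
  intros Hq Hh.
  assert (M1 := is_RInt_gen_moment (q + 1) X ltac:(lra)).
  assert (M2 := is_RInt_gen_moment (q + 2) (- (Rabs X + 1)) ltac:(lra)).
  assert (Hdiff := is_RInt_gen_plus _ _ _ _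
    (is_RInt_gen_minus _ _ _ _ (is_RInt_gen_moment q (X + h) Hq) (is_RInt_gen_moment q X Hq))
    (is_RInt_gen_scal _ h _ M1)).
  apply (RInt_gen_norm (V := R_CompleteNormedModule) _ _ _ _)
    with (3 := Hdiff) (4 := is_RInt_gen_scal _ (h ^ 2) _ M2);
    apply (Filter_prod _ _ _ (fun a => 0 < a < 1) (fun b => 1 < b) (at_right_0_lt 1 Rlt_0_1));
    try (exists 1; auto);
    intros a b Ha Hb; simpl; [lra |].
  intros t Ht. apply (abs_weight_taylor_le q X h t); lra.
Qed.

Lemma is_derive_moment q X : -1 < q -> is_derive (moment q) X (- moment (q + 1) X).
Proof.
  intros Hq. apply (is_derive_quadratic_bound _ _ _ (moment (q + 2) (- (Rabs X + 1)))).
  intros h Hh. replace (moment q (X + h) - moment q X - h * - moment (q + 1) X)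
    with (moment q (X + h) - moment q X + h * moment (q + 1) X) by ring.
  apply abs_moment_taylor_le; assumption.
Qed.

Lemma Dpc_moment beta x :
  Dpc beta x = exp (- x ^ 2 / 4) / Gamma_fun (- beta) * moment (- beta - 1) x.
Proof. reflexivity. Qed.

Section Psi.

Variables a b sigma rho : R.
Hypotheses (hb : 0 < b) (hsigma : 0 < sigma) (hrho : 0 < rho).

Definition psi_arg (y : R) : R := - (b * y - a) / (sigma * b) * sqrt (2 * b).
Definition psi_rate : R := sqrt (2 * b) / sigma.
Definition psi_coef : R := / Gamma_fun (rho / b).
Definition psi_index : R := rho / b - 1.

Lemma psi_rate_pos : 0 < psi_rate.
Proof. apply Rdiv_lt_0_compat; [apply sqrt_lt_R0; lra | exact hsigma]. Qed.

Lemma psi_index_gt : -1 < psi_index.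
Proof. unfold psi_index. assert (0 < rho / b) by (apply Rdiv_lt_0_compat; assumption). lra. Qed.

Lemma psi_moment y : psi a b sigma rho y = psi_coef * moment psi_index (psi_arg y).
Proof.
  unfold psi, psi_coef, psi_index. rewrite Dpc_moment. fold (psi_arg y).
  replace (- (- rho / b)) with (rho / b) by (field; lra).
  assert (Hcancel : exp ((b * y - a) ^ 2 / (2 * sigma ^ 2 * b)) * exp (- psi_arg y ^ 2 / 4) = 1).
  { rewrite <- exp_plus, <- exp_0. f_equal. unfold psi_arg.
    replace ((- (b * y - a) / (sigma * b) * sqrt (2 * b)) ^ 2)
      with ((b * y - a) ^ 2 / (sigma * b) ^ 2 * (sqrt (2 * b) * sqrt (2 * b))) by (field; lra).
    rewrite sqrt_sqrt by lra. field. lra. }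
  set (E1 := exp ((b * y - a) ^ 2 / (2 * sigma ^ 2 * b))) in *.
  set (E2 := exp (- psi_arg y ^ 2 / 4)) in *.
  transitivity (E1 * E2 * (/ Gamma_fun (rho / b) * moment (rho / b - 1) (psi_arg y)));
    [unfold Rdiv; ring |].
  rewrite Hcancel. ring.
Qed.

Lemma is_derive_moment_psi_arg q C y : -1 < q ->
  is_derive (fun y => C * moment q (psi_arg y)) y (C * psi_rate * moment (q + 1) (psi_arg y)).
Proof.
  intros Hq.
  assert (Harg : is_derive psi_arg y (- psi_rate)).
  { unfold psi_arg, psi_rate. auto_derive; [exact I | field; lra]. }
  assert (H := is_derive_scal _ _ C _ (is_derive_comp _ _ _ _ _ (is_derive_moment q _ Hq) Harg)).
  replace (C * psi_rate * moment (q + 1) (psi_arg y))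
    with (scal C (scal (- psi_rate) (- moment (q + 1) (psi_arg y)))).
  - exact H.
  - unfold scal; simpl; unfold mult; simpl. ring.
Qed.

Lemma continuous_moment_psi_arg q y : -1 < q -> continuous (fun y => moment q (psi_arg y)) y.
Proof.
  intros Hq. apply (ex_derive_continuous (fun y => moment q (psi_arg y))).
  eexists. exact (is_derive_ext _ _ _ _ (fun t => Rmult_1_l _) (is_derive_moment_psi_arg q 1 y Hq)).
Qed.

Lemma Derive_psi y :
  Derive (psi a b sigma rho) y = psi_coef * psi_rate * moment (psi_index + 1) (psi_arg y).
Proof.
  rewrite (Derive_ext _ _ y psi_moment).
  apply is_derive_unique, is_derive_moment_psi_arg, psi_index_gt.
Qed.

Lemma Derive2_psi y :
  Derive (Derive (psi a b sigma rho)) y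
  = psi_coef * psi_rate * psi_rate * moment (psi_index + 2) (psi_arg y).
Proof.
  rewrite (Derive_ext _ _ y Derive_psi). replace (psi_index + 2) with (psi_index + 1 + 1) by ring.
  apply is_derive_unique, is_derive_moment_psi_arg. pose proof psi_index_gt. lra.
Qed.

Lemma eq_x0_iff c x : eq_x0 a b sigma rho c x <->
  psi_coef * ((x - c) * psi_rate * moment (psi_index + 1) (psi_arg x)
              - moment psi_index (psi_arg x)) = 0.
Proof. unfold eq_x0. rewrite Derive_psi, psi_moment. split; intros H; rewrite <- H; ring. Qed.

Definition xinf_residual (c x : R) : R :=
  (x - c) * psi_rate * moment (psi_index + 2) (psi_arg x) - moment (psi_index + 1) (psi_arg x).

Lemma eq_xinf_iff c x : psi_coef <> 0 -> eq_xinf a b sigma rho c x <-> xinf_residual c x = 0.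
Proof.
  intros Hcoef. assert (Hk := psi_rate_pos).
  unfold eq_xinf. rewrite Derive2_psi, Derive_psi. split; intros H.
  - assert (H' : psi_coef * psi_rate * xinf_residual c x = 0)
      by (rewrite <- H; unfold xinf_residual; ring).
    apply Rmult_integral in H' as [H' | H']; [apply Rmult_integral in H' as [H' | H'] |]; auto; lra.
  - transitivity (psi_coef * psi_rate * xinf_residual c x); [unfold xinf_residual; ring |].
    rewrite H. ring.
Qed.

Lemma xinf_residual_at_c c : xinf_residual c c < 0.
Proof.
  unfold xinf_residual. pose proof psi_index_gt.
  pose proof (moment_pos (psi_index + 1) (psi_arg c) ltac:(lra)). lra.
Qed.

Lemma xinf_residual_pos c x : psi_coef <> 0 -> eq_x0 a b sigma rho c x -> 0 < xinf_residual c x.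
Proof.
  intros Hcoef Hx. apply eq_x0_iff, Rmult_integral in Hx as [H | H]; [contradiction |].
  apply Rlt_0_minus, moment_ratio_step; [apply psi_index_gt | lra].
Qed.

Lemma continuity_xinf_residual c : continuity (xinf_residual c).
Proof.
  intros x. apply continuity_pt_filterlim. pose proof psi_index_gt.
  apply (continuous_minus (fun x => (x - c) * psi_rate * moment (psi_index + 2) (psi_arg x))).
  - apply (continuous_mult (fun x => (x - c) * psi_rate)).
    + apply (ex_derive_continuous (fun x => (x - c) * psi_rate)). auto_derive. exact I.
    + apply continuous_moment_psi_arg. lra.
  - apply continuous_moment_psi_arg. lra.
Qed.

End Psi.

Theorem lemma4p5 (a b sigma rho c x0 xinf : R)
  (hb : 0 < b) (hsigma : 0 < sigma) (hrho : 0 < rho) (hc : 0 < c)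
  (hx0 : c < x0) (hx0eq : eq_x0 a b sigma rho c x0)
  (hx0uniq : forall x, c < x -> eq_x0 a b sigma rho c x -> x = x0)
  (hxinf : c < xinf) (hxinfeq : eq_xinf a b sigma rho c xinf)
  (hxinfuniq : forall x, c < x -> eq_xinf a b sigma rho c x -> x = xinf) :
  xinf < x0.
Proof.
  (* [psi_coef b rho = / Gamma_fun (rho / b)] cannot vanish, else every x would solve [eq_x0]. *)
  assert (Hcoef : psi_coef b rho <> 0).
  { intros H0. assert (x0 + 1 = x0); [| lra].
    apply hx0uniq; [lra |]. apply eq_x0_iff; [assumption .. |]. rewrite H0. ring. }
  set (F := xinf_residual a b sigma rho c).
  assert (Fc : F c < 0) by (apply xinf_residual_at_c; assumption).
  assert (Fx0 : 0 < F x0) by (apply xinf_residual_pos; assumption).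
  destruct (IVT F c x0 (continuity_xinf_residual a b sigma rho hb hsigma hrho c) hx0 Fc Fx0)
    as [x [[Hcx Hxx0] HFx]].
  assert (Hcx' : c < x) by (destruct Hcx as [? | <-]; [assumption | lra]).
  assert (Hxx0' : x < x0) by (destruct Hxx0 as [? | ->]; [assumption | lra]).
  rewrite <- (hxinfuniq x Hcx' (proj2 (eq_xinf_iff a b sigma rho hb hsigma hrho c x Hcoef) HFx)).
  exact Hxx0'.
Qed.
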